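(* Let $X$ be a real Hilbert space and $f:X\to\mathbb{R}$ a proper $\Phi_{lsc}$-convex function. If $f$ is locally $C^{1,1}$ around $\bar x\in X$, then there exists $\delta>0$ such that $\partial_{lsc}f(y)\ne\emptyset$ for every $y$ with $\|y-\bar x\|<\delta$.
   Context: $\Phi_{lsc}$ is the class of functions $\varphi(x)=-a\|x\|^2+\langle v,x\rangle+c$ ($a\ge0$, $v\in X^*$, $c\in\mathbb{R}$); $f$ is $\Phi_{lsc}$-convex if it is the pointwise supremum of the $\varphi\in\Phi_{lsc}$ with $\varphi\le f$; proper means at least one such $\varphi$ exists. $f$ is locally $C^{1,1}$ around $\bar x$ if there is a ball $B(\delta,\bar x)=\{y:\|y-\bar x\|<\delta\}$ on which $f$ is Gâteaux differentiable and its Gâteaux derivative is Lipschitz continuous. $\partial_{lsc}f(y)$ is the set of $(a,v)\in\mathbb{R}_+\times X^*$ with $f(x)-f(y)\ge\langle v,x-y\rangle-a\|x\|^2+a\|y\|^2$ for all $x\in X$. *)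

From Stdlib Require Import Reals.
Open Scope R_scope.

Record HilbertSpace := {
  H_car :> Type;
  H_zero : H_car;
  H_add : H_car -> H_car -> H_car;
  H_opp : H_car -> H_car;
  H_scal : R -> H_car -> H_car;
  H_inner : H_car -> H_car -> R;
  H_add_assoc : forall x y z, H_add x (H_add y z) = H_add (H_add x y) z;
  H_add_comm : forall x y, H_add x y = H_add y x;
  H_add_zero : forall x, H_add x H_zero = x;
  H_add_opp : forall x, H_add x (H_opp x) = H_zero;
  H_scal_one : forall x, H_scal 1 x = x;
  H_scal_assoc : forall a b x, H_scal a (H_scal b x) = H_scal (a * b) x;
  H_scal_distr_l : forall a x y, H_scal a (H_add x y) = H_add (H_scal a x) (H_scal a y);
  H_scal_distr_r : forall a b x, H_scal (a + b) x = H_add (H_scal a x) (H_scal b x);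
  H_inner_sym : forall x y, H_inner x y = H_inner y x;
  H_inner_add_l : forall x y z, H_inner (H_add x y) z = H_inner x z + H_inner y z;
  H_inner_scal_l : forall a x y, H_inner (H_scal a x) y = a * H_inner x y;
  H_inner_pos : forall x, 0 <= H_inner x x;
  H_inner_def : forall x, H_inner x x = 0 -> x = H_zero;
  H_complete : forall u : nat -> H_car,
    (forall eps, eps > 0 -> exists N, forall m n, (m >= N)%nat -> (n >= N)%nat ->
        sqrt (H_inner (H_add (u m) (H_opp (u n))) (H_add (u m) (H_opp (u n)))) < eps) ->
    exists l, forall eps, eps > 0 -> exists N, forall n, (n >= N)%nat ->
        sqrt (H_inner (H_add (u n) (H_opp l)) (H_add (u n) (H_opp l))) < eps
}.

Arguments H_zero {h}.
Arguments H_add {h}.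
Arguments H_opp {h}.
Arguments H_scal {h}.
Arguments H_inner {h}.

Definition hsub {X : HilbertSpace} (x y : X) : X := H_add x (H_opp y).
Definition hnorm {X : HilbertSpace} (x : X) : R := sqrt (H_inner x x).

Definition in_dual {X : HilbertSpace} (v : X -> R) : Prop :=
  (forall x y, v (H_add x y) = v x + v y) /\
  (forall a x, v (H_scal a x) = a * v x) /\
  (exists C, forall x, Rabs (v x) <= C * hnorm x).

Definition phi_lsc {X : HilbertSpace} (a : R) (v : X -> R) (c : R) (x : X) : R :=
  - a * (hnorm x) ^ 2 + v x + c.

Definition in_Phi_lsc {X : HilbertSpace} (phi : X -> R) : Prop :=
  exists a v c, 0 <= a /\ in_dual v /\ forall x, phi x = phi_lsc a v c x.

Definition Phi_lsc_convex {X : HilbertSpace} (f : X -> R) : Prop :=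
  forall x, is_lub (fun r => exists phi, in_Phi_lsc phi /\
                                   (forall z, phi z <= f z) /\ r = phi x) (f x).

Definition Phi_lsc_proper {X : HilbertSpace} (f : X -> R) : Prop :=
  exists phi, in_Phi_lsc phi /\ forall z, phi z <= f z.

Definition ball {X : HilbertSpace} (delta : R) (xb : X) (y : X) : Prop :=
  hnorm (hsub y xb) < delta.

Definition gateaux_deriv {X : HilbertSpace} (f : X -> R) (y : X) (l : X -> R) : Prop :=
  in_dual l /\
  forall h eps, eps > 0 -> exists d, d > 0 /\ forall t, t <> 0 -> Rabs t < d ->
    Rabs ((f (H_add y (H_scal t h)) - f y) / t - l h) < eps.

(* f locally C^{1,1} around xb: Gateaux differentiable on a ball with Lipschitz
   Gateaux derivative (Lipschitz w.r.t. the dual (operator) norm, unfolded). *)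
Definition locally_C11 {X : HilbertSpace} (f : X -> R) (xb : X) : Prop :=
  exists delta (Df : X -> X -> R) L, delta > 0 /\
    (forall y, ball delta xb y -> gateaux_deriv f y (Df y)) /\
    (forall y z, ball delta xb y -> ball delta xb z ->
       forall h, Rabs (Df y h - Df z h) <= L * hnorm (hsub y z) * hnorm h).

Definition in_subdiff_lsc {X : HilbertSpace} (f : X -> R) (y : X) (a : R) (v : X -> R) : Prop :=
  0 <= a /\ in_dual v /\
  forall x, f x - f y >= v (hsub x y) - a * (hnorm x) ^ 2 + a * (hnorm y) ^ 2.

Definition subdiff_lsc_nonempty {X : HilbertSpace} (f : X -> R) (y : X) : Prop :=
  exists a v, in_subdiff_lsc f y a v.

(* Writing x = y + h, the inequality defining (a, v) in the subdifferential
   with v = Df y + 2a<y, .> reads f (y + h) >= f y + Df y h - a ||h||^2, a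
   quadratic support inequality at y.  For small ||h|| it follows from the
   mean value theorem on the segment [y, y + h] and the Lipschitz bound on
   the derivative, with a = |L| for the Lipschitz constant L.  For large ||h|| the Phi_lsc minorant given
   by properness bounds f below by a concave quadratic, so the inequality
   holds once a is large enough. *)

From Stdlib Require Import Reals Lra Lia.
Open Scope R_scope.

Section HilbertGeometry.
Context {X : HilbertSpace}.
Implicit Types x y z h : X.

Lemma hadd0l x : H_add H_zero x = x.
Proof. rewrite H_add_comm; apply H_add_zero. Qed.

Lemma haddI x y z : H_add x y = H_add x z -> y = z.
Proof.
  intro E. rewrite <- (hadd0l y), <- (hadd0l z), <- (H_add_opp X x), (H_add_comm X x).
  rewrite <- !H_add_assoc, E; reflexivity.
Qed.

Lemma hscal0 x : H_scal 0 x = H_zero.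
Proof.
  apply (haddI (H_scal 0 x)). rewrite H_add_zero, <- H_scal_distr_r.
  f_equal; ring.
Qed.

Lemma hadd_scal y h t s :
  H_add (H_add y (H_scal t h)) (H_scal s h) = H_add y (H_scal (t + s) h).
Proof. rewrite <- H_add_assoc, H_scal_distr_r; reflexivity. Qed.

Lemma hadd_hsub x y : H_add y (hsub x y) = x.
Proof.
  unfold hsub. rewrite H_add_comm, <- H_add_assoc, (H_add_comm X (H_opp y)), H_add_opp.
  apply H_add_zero.
Qed.

Lemma hsub_addl y h z : hsub (H_add y h) z = H_add (hsub y z) h.
Proof. unfold hsub. rewrite <- !H_add_assoc. f_equal. apply H_add_comm. Qed.

Lemma hsub_add_cancel y h : hsub (H_add y h) y = h.
Proof. rewrite hsub_addl. unfold hsub. rewrite H_add_opp. apply hadd0l. Qed.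

Lemma inner_addr x y z : H_inner x (H_add y z) = H_inner x y + H_inner x z.
Proof. rewrite !(H_inner_sym X x). apply H_inner_add_l. Qed.

Lemma inner_scalr a x y : H_inner x (H_scal a y) = a * H_inner x y.
Proof. rewrite !(H_inner_sym X x). apply H_inner_scal_l. Qed.

Lemma inner0r x : H_inner x H_zero = 0.
Proof. rewrite <- (hscal0 H_zero), inner_scalr; ring. Qed.

Lemma hnorm_ge0 x : 0 <= hnorm x.
Proof. apply sqrt_pos. Qed.

Lemma hnorm_sq x : hnorm x ^ 2 = H_inner x x.
Proof. unfold hnorm. rewrite <- Rsqr_pow2. apply Rsqr_sqrt, H_inner_pos. Qed.

Lemma hnormZ t x : hnorm (H_scal t x) = Rabs t * hnorm x.
Proof.
  unfold hnorm. rewrite H_inner_scal_l, inner_scalr, <- Rmult_assoc, sqrt_mult.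
  - change (t * t) with (Rsqr t). now rewrite sqrt_Rsqr_abs.
  - nra.
  - apply H_inner_pos.
Qed.

Lemma hnormD_sq x y :
  hnorm (H_add x y) ^ 2 = hnorm x ^ 2 + 2 * H_inner x y + hnorm y ^ 2.
Proof.
  rewrite !hnorm_sq, H_inner_add_l, !inner_addr, (H_inner_sym X y x). ring.
Qed.

(* Expand 0 <= ||<y,y> x - <x,y> y||^2 = <y,y> (<x,x><y,y> - <x,y>^2). *)
Lemma Cauchy_Schwarz x y : Rabs (H_inner x y) <= hnorm x * hnorm y.
Proof.
  set (p := H_inner x y). set (q := H_inner y y).
  assert (Hw := H_inner_pos X (H_add (H_scal q x) (H_scal (- p) y))).
  rewrite H_inner_add_l, !inner_addr, !H_inner_scal_l, !inner_scalr in Hw.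
  rewrite (H_inner_sym X y x) in Hw. fold p q in Hw.
  assert (Hx := hnorm_sq x). assert (Hy := hnorm_sq y). fold q in Hy.
  assert (Nx := hnorm_ge0 x). assert (Ny := hnorm_ge0 y).
  assert (Hsq : p ^ 2 <= (hnorm x * hnorm y) ^ 2).
  { destruct (Req_dec q 0) as [Zq | Zq].
    - apply H_inner_def in Zq. unfold p. rewrite Zq, inner0r, pow_i by lia. apply pow2_ge_0.
    - assert (0 < q) by (assert (Hq : 0 <= q) by apply H_inner_pos; lra).
      assert (p ^ 2 <= H_inner x x * q) by (apply (Rmult_le_reg_l q); nra).
      rewrite Rpow_mult_distr, Hx, Hy. lra. }
  rewrite <- !Rsqr_pow2 in Hsq. apply Rsqr_le_abs_0 in Hsq.
  rewrite (Rabs_pos_eq (hnorm x * hnorm y)) in Hsq by nra. exact Hsq.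
Qed.

Lemma hnorm_triangle x y : hnorm (H_add x y) <= hnorm x + hnorm y.
Proof.
  assert (Hxy := hnormD_sq x y). assert (CS := Cauchy_Schwarz x y).
  assert (Hp := RRle_abs (H_inner x y)).
  assert (Nxy := hnorm_ge0 (H_add x y)). assert (Nx := hnorm_ge0 x).
  assert (Ny := hnorm_ge0 y). nra.
Qed.

Lemma in_dual_add (v w : X -> R) :
  in_dual v -> in_dual w -> in_dual (fun x => v x + w x).
Proof.
  intros [Av [Sv [Cv Bv]]] [Aw [Sw [Cw Bw]]]. split; [|split].
  - intros x y. rewrite Av, Aw. ring.
  - intros a x. rewrite Sv, Sw. ring.
  - exists (Cv + Cw). intro x. eapply Rle_trans; [apply Rabs_triang|].
    specialize (Bv x). specialize (Bw x). lra.
Qed.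

Lemma in_dual_inner (c : R) y : in_dual (fun x => c * H_inner y x).
Proof.
  split; [|split].
  - intros x z. rewrite inner_addr. ring.
  - intros a x. rewrite inner_scalr. ring.
  - exists (Rabs c * hnorm y). intro x. rewrite Rabs_mult, Rmult_assoc.
    apply Rmult_le_compat_l; [apply Rabs_pos | apply Cauchy_Schwarz].
Qed.

Lemma in_dual_bound (v : X -> R) :
  in_dual v -> exists C, 0 <= C /\ forall x, Rabs (v x) <= C * hnorm x.
Proof.
  intros [_ [_ [C HC]]]. exists (Rabs C). split; [apply Rabs_pos|].
  intro x. eapply Rle_trans; [apply HC|].
  apply Rmult_le_compat_r; [apply hnorm_ge0 | apply RRle_abs].
Qed.

End HilbertGeometry.

Lemma segment_in_ball {X : HilbertSpace} (delta : R) (xb y h : X) (t : R) :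
  hnorm (hsub y xb) + hnorm h < delta -> 0 <= t <= 1 ->
  ball delta xb (H_add y (H_scal t h)).
Proof.
  intros Hyh Ht. unfold ball. rewrite hsub_addl.
  eapply Rle_lt_trans; [apply hnorm_triangle|].
  rewrite hnormZ, Rabs_pos_eq by lra.
  assert (Nh := hnorm_ge0 h). nra.
Qed.

Lemma gateaux_deriv_line {X : HilbertSpace} (f : X -> R) (y h : X) (t : R) (l : X -> R) :
  gateaux_deriv f (H_add y (H_scal t h)) l ->
  derivable_pt_lim (fun s => f (H_add y (H_scal s h))) t (l h).
Proof.
  intros [_ Dl] eps Heps. destruct (Dl h eps Heps) as [d [Hd Hl]].
  exists (mkposreal d Hd). intros s Hs Hsd.
  rewrite <- hadd_scal. apply Hl; assumption.
Qed.

Lemma local_quadratic_support {X : HilbertSpace} (f : X -> R) (xb : X) (delta : R)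
    (Df : X -> X -> R) (L : R) :
  (forall y, ball delta xb y -> gateaux_deriv f y (Df y)) ->
  (forall y z, ball delta xb y -> ball delta xb z ->
     forall h, Rabs (Df y h - Df z h) <= L * hnorm (hsub y z) * hnorm h) ->
  forall y h, hnorm (hsub y xb) + hnorm h < delta ->
    f y + Df y h - Rabs L * hnorm h ^ 2 <= f (H_add y h).
Proof.
  intros HG HL y h Hyh.
  destruct (MVT_cor2 (fun s => f (H_add y (H_scal s h)))
              (fun s => Df (H_add y (H_scal s h)) h) 0 1) as [c [Ec Hc]].
  - lra.
  - intros t Ht. apply gateaux_deriv_line, HG, segment_in_ball; assumption.
  - rewrite H_scal_one, hscal0, H_add_zero in Ec.
    assert (Lc := HL _ _ (segment_in_ball _ _ _ _ c Hyh ltac:(lra))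
                         (segment_in_ball _ _ _ _ 0 Hyh ltac:(lra)) h).
    rewrite hscal0, H_add_zero, hsub_add_cancel, hnormZ, (Rabs_pos_eq c) in Lc by lra.
    assert (Nh := hnorm_ge0 h). assert (HL0 := Rabs_pos L).
    assert (Lle := RRle_abs L).
    assert (Lip : L * (c * hnorm h) * hnorm h <= Rabs L * hnorm h ^ 2).
    { assert (0 <= c * hnorm h ^ 2) by (apply Rmult_le_pos; [lra | apply pow2_ge_0]).
      assert (0 <= Rabs L * ((1 - c) * hnorm h ^ 2))
        by (apply Rmult_le_pos; [lra | apply Rmult_le_pos; [lra | apply pow2_ge_0]]).
      nra. }
    assert (Hd := Rle_abs (- (Df (H_add y (H_scal c h)) h - Df y h))).
    rewrite Rabs_Ropp in Hd. lra.
Qed.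

Lemma affine_le_quadratic_away_from_0 (r p q : R) :
  0 < r -> exists A, 0 <= A /\ forall n, r <= n -> p * n + q <= A * n ^ 2.
Proof.
  intro Hr. set (s := / r).
  assert (Hs : 0 < s) by (apply Rinv_0_lt_compat; exact Hr).
  assert (Hrs : r * s = 1) by (apply Rinv_r; lra).
  exists (Rabs p * s + Rabs q * s ^ 2).
  assert (Ap := Rabs_pos p). assert (Aq := Rabs_pos q).
  split; [nra|]. intros n Hn.
  assert (Hns : 1 <= n * s) by nra.
  assert (Pp := RRle_abs p). assert (Pq := RRle_abs q).
  assert (p * n <= Rabs p * n) by (apply Rmult_le_compat_r; lra).
  assert (Rabs p * n <= Rabs p * n * (n * s)) by (assert (0 <= Rabs p * n) by nra; nra).
  assert (1 <= (n * s) * (n * s)) by nra.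
  assert (Rabs q <= Rabs q * ((n * s) * (n * s))) by nra.
  replace ((Rabs p * s + Rabs q * s ^ 2) * n ^ 2)
    with (Rabs p * n * (n * s) + Rabs q * ((n * s) * (n * s))) by ring.
  lra.
Qed.

Lemma quadratic_minorant_bound {X : HilbertSpace} (f : X -> R) :
  Phi_lsc_proper f ->
  exists a C, 0 <= a /\ 0 <= C /\ forall x, - a * hnorm x ^ 2 - C * hnorm x - C <= f x.
Proof.
  intros [phi [[a [v [c [Ha [Dv Ephi]]]]] Hphi]].
  destruct (in_dual_bound v Dv) as [Cv [HCv Bv]].
  exists a, (Rmax Cv (Rabs c)). split; [exact Ha|]. split.
  - eapply Rle_trans; [apply HCv | apply Rmax_l].
  - intro x. specialize (Hphi x). rewrite Ephi in Hphi. unfold phi_lsc in Hphi.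
    specialize (Bv x). assert (Nx := hnorm_ge0 x).
    assert (Hv := Rle_abs (- v x)). rewrite Rabs_Ropp in Hv.
    assert (Hc := Rle_abs (- c)). rewrite Rabs_Ropp in Hc.
    assert (Cv * hnorm x <= Rmax Cv (Rabs c) * hnorm x)
      by (apply Rmult_le_compat_r; [exact Nx | apply Rmax_l]).
    assert (Rabs c <= Rmax Cv (Rabs c)) by apply Rmax_r.
    lra.
Qed.

Lemma far_quadratic_support {X : HilbertSpace} (f : X -> R) (y : X) (l : X -> R) (r : R) :
  Phi_lsc_proper f -> in_dual l -> 0 < r ->
  exists A, 0 <= A /\ forall h, r <= hnorm h -> f y + l h - A * hnorm h ^ 2 <= f (H_add y h).
Proof.
  intros Hf Dl Hr.
  destruct (quadratic_minorant_bound f Hf) as [a [C [Ha [HC Hmin]]]].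
  destruct (in_dual_bound l Dl) as [Cl [HCl Bl]].
  destruct (affine_le_quadratic_away_from_0 r (2 * a * hnorm y + C + Cl)
              (a * hnorm y ^ 2 + C * hnorm y + C + f y) Hr) as [A [HA Hdom]].
  exists (a + A). split; [lra|]. intros h Hh.
  specialize (Hdom _ Hh). specialize (Hmin (H_add y h)). specialize (Bl h).
  assert (Hl := Rle_abs (l h)).
  assert (Tri := hnorm_triangle y h).
  assert (Ny := hnorm_ge0 y). assert (Nh := hnorm_ge0 h).
  assert (Nyh := hnorm_ge0 (H_add y h)).
  assert (a * hnorm (H_add y h) ^ 2 <= a * (hnorm y + hnorm h) ^ 2)
    by (apply Rmult_le_compat_l; [exact Ha | apply pow_incr; lra]).
  assert (C * hnorm (H_add y h) <= C * (hnorm y + hnorm h))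
    by (apply Rmult_le_compat_l; lra).
  nra.
Qed.

Lemma in_subdiff_lsc_of_support {X : HilbertSpace} (f : X -> R) (y : X) (a : R) (l : X -> R) :
  0 <= a -> in_dual l ->
  (forall h, f y + l h - a * hnorm h ^ 2 <= f (H_add y h)) ->
  in_subdiff_lsc f y a (fun x => l x + 2 * a * H_inner y x).
Proof.
  intros Ha Dl Hsupp. split; [exact Ha|]. split.
  - apply (in_dual_add l _ Dl (in_dual_inner (2 * a) y)).
  - intro x. set (h := hsub x y).
    assert (Ex : x = H_add y h) by (symmetry; apply hadd_hsub).
    specialize (Hsupp h). rewrite <- Ex in Hsupp.
    rewrite Ex at 2. rewrite hnormD_sq, hnorm_sq. lra.
Qed.

Theorem mainTheorem6 (X : HilbertSpace) (f : X -> R) (xb : X) :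
  Phi_lsc_proper f -> Phi_lsc_convex f -> locally_C11 f xb ->
  exists delta, delta > 0 /\
    forall y : X, hnorm (hsub y xb) < delta -> subdiff_lsc_nonempty f y.
Proof.
  intros Hproper _ [delta [Df [L [Hd [HG HL]]]]].
  exists (delta / 2). split; [lra|]. intros y Hy.
  assert (Dy : in_dual (Df y))
    by (apply (HG y); unfold ball; pose proof (hnorm_ge0 (hsub y xb)); lra).
  destruct (far_quadratic_support f y (Df y) (delta / 2) Hproper Dy ltac:(lra))
    as [A [HA Hfar]].
  set (a := Rmax (Rabs L) A).
  assert (HLa : Rabs L <= a) by apply Rmax_l.
  assert (HAa : A <= a) by apply Rmax_r.
  exists a, (fun x => Df y x + 2 * a * H_inner y x).
  apply in_subdiff_lsc_of_support; [pose proof (Rabs_pos L); lra | exact Dy |].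
  intro h. assert (Hh2 := pow2_ge_0 (hnorm h)).
  destruct (Rlt_le_dec (hnorm h) (delta / 2)) as [Hnear | Hfar_h].
  - assert (Hloc := local_quadratic_support f xb delta Df L HG HL y h ltac:(lra)).
    nra.
  - specialize (Hfar h Hfar_h). nra.
Qed.
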